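(* Let $\bar g$ be a two-dimensional Lorentzian metric and $\psi$ a smooth function such that $d\psi$ is a non-null conformal Killing one-form of $\bar g$, and let $(x,t)$ be local coordinates in which $\psi=\psi(x)$ and $\bar g=\psi'(x)\,(dx^2-dt^2)$. Let $F_1,F_2$ be functions of $x$ only such that $F_1\,dF_2$ is also a non-null conformal Killing one-form of $\bar g$. Then there is a constant $\tilde k$ such that \[ F_1\,dF_2=\tilde k\, d\psi. \]
   Context: A one-form $\omega$ on a pseudo-Riemannian manifold $(M,\bar g)$ is called a conformal Killing one-form if its metric dual vector field $X=\bar g^{-1}(\omega)$ is a conformal Killing vector field, i.e. $\mathcal{L}_X\bar g=\lambda\,\bar g$ for some function $\lambda$. Non-null means $\bar g^{-1}(\omega,\omega)\neq0$. *)

From Stdlib Require Import Reals.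
From Coquelicot Require Import Coquelicot.
Open Scope R_scope.

Inductive idx := ix | it.

Definition pt := (R * R)%type.

Definition sum2 (f : idx -> R) : R := f ix + f it.

Definition pd (i : idx) (f : pt -> R) (p : pt) : R :=
  match i with
  | ix => Derive (fun x => f (x, snd p)) (fst p)
  | it => Derive (fun t => f (fst p, t)) (snd p)
  end.

Definition metric := idx -> idx -> pt -> R.
Definition oneform := idx -> pt -> R.
Definition vecfield := idx -> pt -> R.

Definition detg (g : metric) (p : pt) : R :=
  g ix ix p * g it it p - g ix it p * g it ix p.

Definition ginv (g : metric) : metric := fun i j p =>
  match i, j with
  | ix, ix => g it it p / detg g p
  | it, it => g ix ix p / detg g p
  | ix, it => - g ix it p / detg g p
  | it, ix => - g it ix p / detg g p
  end.

Definition sharp (g : metric) (w : oneform) : vecfield :=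
  fun i p => sum2 (fun j => ginv g i j p * w j p).

Definition lie_metric (X : vecfield) (g : metric) : metric := fun i j p =>
  sum2 (fun k => X k p * pd k (g i j) p)
  + sum2 (fun k => g k j p * pd i (X k) p)
  + sum2 (fun k => g i k p * pd j (X k) p).

Definition conformal_killing_vf (U : pt -> Prop) (g : metric) (X : vecfield) : Prop :=
  exists lam : pt -> R, forall p, U p -> forall i j,
    lie_metric X g i j p = lam p * g i j p.

Definition conformal_killing_form (U : pt -> Prop) (g : metric) (w : oneform) : Prop :=
  conformal_killing_vf U g (sharp g w).

Definition inner_inv (g : metric) (w : oneform) (p : pt) : R :=
  sum2 (fun i => sum2 (fun j => ginv g i j p * w i p * w j p)).

Definition non_null (U : pt -> Prop) (g : metric) (w : oneform) : Prop :=
  forall p, U p -> inner_inv g w p <> 0.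

Definition lorentzian2 (U : pt -> Prop) (g : metric) : Prop :=
  forall p, U p -> (forall i j, g i j p = g j i p) /\ detg g p < 0.

Definition dform (f : pt -> R) : oneform := fun i p => pd i f p.
Definition fmul (h : pt -> R) (w : oneform) : oneform := fun i p => h p * w i p.

Definition of_x (f : R -> R) : pt -> R := fun p => f (fst p).

Definition conf_metric (psi : R -> R) : metric := fun i j p =>
  match i, j with
  | ix, ix => Derive psi (fst p)
  | it, it => - Derive psi (fst p)
  | _, _ => 0
  end.

Definition box (a b c d : R) : pt -> Prop :=
  fun p => a < fst p < b /\ c < snd p < d.

Definition smooth_on (a b : R) (f : R -> R) : Prop :=
  forall n x, a < x < b -> ex_derive_n f n x.

(* For g = phi (dx^2 - dt^2) with phi = psi', the trace-free part of L_X g = lambda g reduces to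
   d_x X^x = d_t X^t, since phi <> 0 (g is Lorentzian).  The dual of F1 dF2 = F1 F2' dx is (F1 F2' / phi) d_x, whose
   t-component vanishes, so F1 F2' / phi has zero derivative on the interval and is a constant k;
   hence F1 dF2 = k phi dx = k dpsi. *)
From Stdlib Require Import Reals Lra.
From Coquelicot Require Import Coquelicot.
Open Scope R_scope.

Lemma Derive_eq0_interval_const (f : R -> R) (a b : R) :
  (forall x, a < x < b -> ex_derive f x /\ Derive f x = 0) ->
  forall x y, a < x < b -> a < y < b -> f x = f y.
Proof.
  intros Hf x y Hx Hy.
  assert (Hxy : forall z, Rmin x y <= z <= Rmax x y -> a < z < b).
  { intros z Hz; unfold Rmin, Rmax in Hz; destruct (Rle_dec x y); lra. }
  destruct (MVT_gen f x y (Derive f)) as [z [Hz E]].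
  - intros z Hz. apply Derive_correct, Hf, Hxy; lra.
  - intros z Hz. apply continuity_pt_filterlim.
    apply (ex_derive_continuous (K := R_AbsRing) (V := R_NormedModule)), Hf, Hxy, Hz.
  - rewrite (proj2 (Hf z (Hxy z Hz))) in E. lra.
Qed.

Lemma locally_open_interval (a b x : R) (P : R -> Prop) :
  a < x < b -> (forall y, a < y < b -> P y) -> locally x P.
Proof.
  intros Hx HP.
  apply (filter_imp (fun y => a < y /\ y < b)); [exact HP|].
  apply (open_and _ _ (open_gt a) (open_lt b)), Hx.
Qed.

Lemma dform_of_x_ix (f : R -> R) (p : pt) : dform (of_x f) ix p = Derive f (fst p).
Proof. reflexivity. Qed.

Lemma dform_of_x_it (f : R -> R) (p : pt) : dform (of_x f) it p = 0.
Proof. unfold dform, pd, of_x; simpl. apply Derive_const. Qed.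

Lemma lorentzian2_conf_metric_Derive_neq0 (a b c d : R) (psi : R -> R) :
  c < d -> lorentzian2 (box a b c d) (conf_metric psi) ->
  forall x, a < x < b -> Derive psi x <> 0.
Proof.
  intros Hcd Hlor x Hx E.
  destruct (Hlor (x, (c + d) / 2)) as [_ Hdet]; [split; simpl; lra|].
  unfold detg, conf_metric in Hdet; simpl in Hdet. rewrite E in Hdet. lra.
Qed.

Section ConformalFlatMetric.

Variable psi : R -> R.

Lemma sharp_conf_metric_ix (w : oneform) (p : pt) :
  Derive psi (fst p) <> 0 ->
  sharp (conf_metric psi) w ix p = w ix p / Derive psi (fst p).
Proof.
  intros Hphi. unfold sharp, sum2, ginv, detg, conf_metric. field. exact Hphi.
Qed.

Lemma sharp_conf_metric_it (w : oneform) (p : pt) :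
  Derive psi (fst p) <> 0 ->
  sharp (conf_metric psi) w it p = - w it p / Derive psi (fst p).
Proof.
  intros Hphi. unfold sharp, sum2, ginv, detg, conf_metric. field. exact Hphi.
Qed.

(* Adding the xx and tt components of L_X g = lambda g cancels both lambda and the terms in X^x phi'. *)
Lemma conformal_killing_conf_metric_pd (U : pt -> Prop) (X : vecfield) (p : pt) :
  conformal_killing_vf U (conf_metric psi) X -> U p -> Derive psi (fst p) <> 0 ->
  pd ix (X ix) p = pd it (X it) p.
Proof.
  intros [lam Hlam] Hp Hphi.
  pose proof (Hlam p Hp ix ix) as Exx. pose proof (Hlam p Hp it it) as Ett.
  unfold lie_metric, sum2, pd, conf_metric in Exx, Ett; simpl in Exx, Ett.
  rewrite Derive_opp, !Derive_const in Ett. rewrite Derive_const in Exx.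
  change (Derive (fun x => Derive psi x)) with (Derive (Derive psi)) in Exx.
  unfold pd. apply (Rmult_eq_reg_l (2 * Derive psi (fst p))); [lra|].
  apply Rmult_integral_contrapositive_currified; [lra | exact Hphi].
Qed.

Lemma conformal_killing_x_form_Derive_ratio (a b c d : R) (f : R -> R) (w : oneform) (x : R) :
  (forall p, w ix p = f (fst p)) -> (forall p, w it p = 0) ->
  (forall y, a < y < b -> Derive psi y <> 0) ->
  conformal_killing_form (box a b c d) (conf_metric psi) w ->
  a < x < b -> c < d ->
  Derive (fun y => f y / Derive psi y) x = 0.
Proof.
  intros Hwx Hwt Hphi Hck Hx Hcd.
  set (t := (c + d) / 2).
  pose proof (conformal_killing_conf_metric_pd _ _ (x, t) Hck) as Hpd.
  unfold pd in Hpd; simpl in Hpd.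
  rewrite (Derive_ext (fun s => sharp (conf_metric psi) w it (x, s)) (fun _ => 0)) in Hpd.
  2: { intros s. rewrite sharp_conf_metric_it by apply Hphi, Hx.
       rewrite Hwt. unfold Rdiv. ring. }
  rewrite Derive_const in Hpd.
  rewrite <- Hpd; [| split; simpl; unfold t; lra | apply Hphi, Hx].
  apply Derive_ext_loc, (locally_open_interval a b x); [exact Hx|].
  intros y Hy. rewrite sharp_conf_metric_ix by apply Hphi, Hy.
  rewrite Hwx. reflexivity.
Qed.

End ConformalFlatMetric.

Theorem proposition2 (a b c d : R) (psi F1 F2 : R -> R) :
  a < b -> c < d ->
  smooth_on a b psi -> smooth_on a b F1 -> smooth_on a b F2 ->
  lorentzian2 (box a b c d) (conf_metric psi) ->
  conformal_killing_form (box a b c d) (conf_metric psi) (dform (of_x psi)) ->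
  non_null (box a b c d) (conf_metric psi) (dform (of_x psi)) ->
  conformal_killing_form (box a b c d) (conf_metric psi)
    (fmul (of_x F1) (dform (of_x F2))) ->
  non_null (box a b c d) (conf_metric psi) (fmul (of_x F1) (dform (of_x F2))) ->
  exists k : R, forall p, box a b c d p -> forall i,
    fmul (of_x F1) (dform (of_x F2)) i p = k * dform (of_x psi) i p.
Proof.
  intros Hab Hcd Spsi SF1 SF2 Hlor _ _ Hck _.
  pose proof (lorentzian2_conf_metric_Derive_neq0 a b c d psi Hcd Hlor) as Hphi.
  set (k := fun y => F1 y * Derive F2 y / Derive psi y).
  assert (Hk : forall x, a < x < b -> ex_derive k x /\ Derive k x = 0).
  { intros x Hx. split.
    - apply ex_derive_div; [apply ex_derive_mult | | apply Hphi, Hx].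
      + exact (SF1 1%nat x Hx).
      + exact (SF2 2%nat x Hx).
      + exact (Spsi 2%nat x Hx).
    - apply (conformal_killing_x_form_Derive_ratio psi a b c d
               (fun y => F1 y * Derive F2 y) (fmul (of_x F1) (dform (of_x F2))) x
               (fun q => eq_refl)); try assumption.
      intros q. unfold fmul. rewrite dform_of_x_it. ring. }
  exists (k ((a + b) / 2)). intros p [Hp _] [|].
  - rewrite <- (Derive_eq0_interval_const k a b Hk (fst p)) by lra.
    unfold fmul, k. rewrite !dform_of_x_ix. unfold of_x. field. apply Hphi, Hp.
  - unfold fmul. rewrite !dform_of_x_it. ring.
Qed.
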